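(* Let $N=\{1,\dots,n\}$ and let $F:2^N\to\mathbb{R}$ be quasi-submodular. Suppose the maximization procedure (described in the context) outputs the lattice $[X_+,Y_+]$. Then every local maximum $P$ of $F$ satisfies $X_+\subseteq P\subseteq Y_+$.
   Context: For $A\subseteq N$ and $i\in N$, write $A+i=A\cup\{i\}$, $A-i=A\setminus\{i\}$, and $F(i\mid A)=F(A+i)-F(A)$. $F$ is quasi-submodular if for all $X,Y\subseteq N$ both hold: $F(X\cap Y)\ge F(X)\Rightarrow F(Y)\ge F(X\cup Y)$, and $F(X\cap Y)>F(X)\Rightarrow F(Y)>F(X\cup Y)$. A set $X\subseteq N$ is a local maximum of $F$ if $F(X-i)\le F(X)$ for all $i\in X$ and $F(X+j)\le F(X)$ for all $j\in N\setminus X$. Maximization procedure: set $X_0=\emptyset$, $Y_0=N$; for $t=0,1,2,\dots$: let $U_t=\{u\in Y_t\setminus X_t: F(u\mid Y_t-u)>0\}$ and $X_{t+1}=X_t\cup U_t$; let $D_t=\{d\in Y_t\setminus X_t: F(d\mid X_t)<0\}$ and $Y_{t+1}=Y_t\setminus D_t$; if $X_{t+1}=X_t$ and $Y_{t+1}=Y_t$, stop and output the lattice $[X_t,Y_t]=\{U: X_t\subseteq U\subseteq Y_t\}$; otherwise continue with $t+1$. *)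

From mathcomp Require Import all_boot all_order all_algebra.
Set Implicit Arguments. Unset Strict Implicit. Unset Printing Implicit Defensive.
Import Order.TTheory GRing.Theory Num.Theory.
Local Open Scope ring_scope.

Section Defs.
Variables (R : realFieldType) (n : nat).
Implicit Types (F : {set 'I_n} -> R) (A X Y : {set 'I_n}) (i : 'I_n).

Definition marg F i A : R := F (i |: A) - F A.

Definition quasi_submodular F : Prop :=
  forall X Y : {set 'I_n},
    (F (X :&: Y) >= F X -> F Y >= F (X :|: Y)) /\
    (F (X :&: Y) > F X -> F Y > F (X :|: Y)).

Definition local_max F X : Prop :=
  (forall i, i \in X -> F (X :\ i) <= F X) /\
  (forall j, j \notin X -> F (j |: X) <= F X).

Definition U_set F X Y : {set 'I_n} :=
  [set u in Y :\: X | 0 < marg F u (Y :\ u)].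
Definition D_set F X Y : {set 'I_n} :=
  [set d in Y :\: X | marg F d X < 0].
Definition mp_step F (p : {set 'I_n} * {set 'I_n}) : {set 'I_n} * {set 'I_n} :=
  (p.1 :|: U_set F p.1 p.2, p.2 :\: D_set F p.1 p.2).

Definition mp_outputs F (Xp Yp : {set 'I_n}) : Prop :=
  exists t : nat,
    iter t (mp_step F) (set0, setT) = (Xp, Yp) /\
    mp_step F (Xp, Yp) = (Xp, Yp).
End Defs.

(* If an element u with F(u | Y - u) > 0 were missing from P,
   quasi-submodularity applied to P + u and Y - u would turn F(P + u) <= F(P)
   into F(Y) <= F(Y - u); dually, an element d of P with F(d | X) < 0 would
   give, through X + d and P - d, F(P) < F(P - d).  So each round keeps
   X_t <= P <= Y_t, and the claim follows by induction on the rounds. *)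
From mathcomp Require Import all_boot all_order all_algebra.
Import Order.TTheory GRing.Theory Num.Theory.
Local Open Scope ring_scope.

Section SetU1D1.
Variables (T : finType) (A B : {set T}) (i : T).
Hypotheses (sAB : A \subset B) (iA : i \notin A).

Lemma setU1I_D1 : (i |: A) :&: (B :\ i) = A.
Proof.
apply/setP => j; rewrite !inE; case: (eqVneq j i) => [->|_] /=.
  by rewrite (negbTE iA).
by case jA: (j \in A); rewrite //= (subsetP sAB).
Qed.

Lemma setU1U_D1 : i \in B -> (i |: A) :|: (B :\ i) = B.
Proof.
move=> iB; apply/setP => j; rewrite !inE; case: (eqVneq j i) => [->|_] //=.
by case jA: (j \in A); rewrite //= (subsetP sAB).
Qed.

End SetU1D1.

Section LocalMaxSandwich.
Variables (R : realFieldType) (n : nat) (F : {set 'I_n} -> R).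
Hypothesis qsF : quasi_submodular F.
Variable P : {set 'I_n}.
Hypothesis lmP : local_max F P.

Lemma local_max_mem_marg_gt0 (Y : {set 'I_n}) (u : 'I_n) :
  P \subset Y -> u \in Y -> 0 < marg F u (Y :\ u) -> u \in P.
Proof.
move=> sPY uY; rewrite /marg setD1K // subr_gt0 => gainY.
apply/negPn/negP => uP.
have [qs_le _] := qsF (u |: P) (Y :\ u).
rewrite setU1I_D1 // setU1U_D1 // in qs_le.
by move: gainY; rewrite ltNge qs_le // lmP.2.
Qed.

Lemma local_max_marg_ge0 (X : {set 'I_n}) (d : 'I_n) :
  X \subset P -> d \in P -> d \notin X -> 0 <= marg F d X.
Proof.
move=> sXP dP dX; rewrite /marg subr_ge0 leNgt; apply/negP => lossX.
have [_ qs_lt] := qsF (d |: X) (P :\ d).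
rewrite setU1I_D1 // setU1U_D1 // in qs_lt.
by move: (lmP.1 d dP); rewrite leNgt qs_lt.
Qed.

Lemma mp_step_sandwich (X Y : {set 'I_n}) :
  X \subset P -> P \subset Y ->
  (mp_step F (X, Y)).1 \subset P /\ P \subset (mp_step F (X, Y)).2.
Proof.
move=> sXP sPY; split => /=.
  rewrite subUset sXP; apply/subsetP => u; rewrite !inE => /andP[/andP[_ uY]].
  exact: local_max_mem_marg_gt0.
apply/subsetP => d dP; rewrite !inE (subsetP sPY) // andbT.
apply/negP => /andP[/andP[dX _]]; apply/negP; rewrite -leNgt.
exact: local_max_marg_ge0.
Qed.

Lemma mp_iter_sandwich (t : nat) :
  (iter t (mp_step F) (set0, setT)).1 \subset P /\
  P \subset (iter t (mp_step F) (set0, setT)).2.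
Proof.
elim: t => [|t]; first by rewrite sub0set subsetT.
rewrite iterS; case: (iter t _ _) => X Y /= [sXP sPY].
exact: mp_step_sandwich.
Qed.

End LocalMaxSandwich.

Theorem lemma8 (R : realFieldType) (n : nat) (F : {set 'I_n} -> R)
    (Xp Yp : {set 'I_n}) :
  quasi_submodular F ->
  mp_outputs F Xp Yp ->
  forall P : {set 'I_n}, local_max F P -> Xp \subset P /\ P \subset Yp.
Proof.
move=> qsF [t [iter_t _]] P lmP.
by have := @mp_iter_sandwich _ _ F qsF P lmP t; rewrite iter_t.
Qed.
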